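(* Let $\alpha\in\Phi_+$. Then: (a) the set $\Phi_+\setminus\operatorname{leg}(h_\alpha)$ is closed; (b) $V_\alpha:=\prod_{\gamma\in\Phi_+\setminus\operatorname{leg}(h_\alpha)}X_\gamma$ is a subgroup of $U$; (c) $X_\alpha\cap[V_\alpha,V_\alpha]=\{1\}$; (d) for each $s\in\mathbb{F}_q^\times$ there is a linear character $\lambda_{\alpha,s}$ of $V_\alpha$ with $\lambda_{\alpha,s}|_{X_\alpha}=\varphi_{\alpha,s}$ and $X_\gamma\subseteq\ker(\lambda_{\alpha,s})$ for every $\gamma\in\Phi_+$ with $\operatorname{ht}(\gamma)>\operatorname{ht}(\alpha)$.
   Context: $q$ is a power of a prime $p$. $\Phi$ is a root system of type $D_4$ with simple roots $\alpha_1,\alpha_2,\alpha_3,\alpha_4$ ($\alpha_3$ central node), positive roots $\Phi_+=\{\alpha_1,\dots,\alpha_{12}\}$ with $\alpha_5=\alpha_1+\alpha_3$, $\alpha_6=\alpha_2+\alpha_3$, $\alpha_7=\alpha_3+\alpha_4$, $\alpha_8=\alpha_1+\alpha_2+\alpha_3$, $\alpha_9=\alpha_1+\alpha_3+\alpha_4$, $\alpha_{10}=\alpha_2+\alpha_3+\alpha_4$, $\alpha_{11}=\alpha_1+\alpha_2+\alpha_3+\alpha_4$, $\alpha_{12}=\alpha_1+\alpha_2+2\alpha_3+\alpha_4$; $\operatorname{ht}$ is the height (sum of coefficients in the simple roots). A nonempty $S\subseteq\Phi$ is closed if for all $\alpha,\beta\in S$, either $\alpha+\beta\in S$ or $\alpha+\beta\notin\Phi$.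 $U=U(q)$ is the Sylow $p$-subgroup of the Chevalley group $D_4(q)$ generated by $x_i(t)$ ($i=1,\dots,12$, $t\in\mathbb{F}_q$), with $x_i(t)x_i(u)=x_i(t+u)$, each element uniquely $x_1(d_1)\cdots x_{12}(d_{12})$, and commutators ($[a,b]=a^{-1}b^{-1}ab$): $[x_1(t),x_3(u)]=x_5(tu)$, $[x_1(t),x_6(u)]=x_8(-tu)$, $[x_1(t),x_7(u)]=x_9(tu)$, $[x_1(t),x_{10}(u)]=x_{11}(-tu)$, $[x_2(t),x_3(u)]=x_6(tu)$, $[x_2(t),x_5(u)]=x_8(-tu)$, $[x_2(t),x_7(u)]=x_{10}(tu)$, $[x_2(t),x_9(u)]=x_{11}(-tu)$, $[x_3(t),x_4(u)]=x_7(tu)$, $[x_3(t),x_{11}(u)]=x_{12}(-tu)$, $[x_4(t),x_5(u)]=x_9(-tu)$, $[x_4(t),x_6(u)]=x_{10}(-tu)$, $[x_4(t),x_8(u)]=x_{11}(-tu)$, $[x_5(t),x_{10}(u)]=x_{12}(-tu)$, $[x_6(t),x_9(u)]=x_{12}(-tu)$, $[x_7(t),x_8(u)]=x_{12}(tu)$, others trivial. $X_{\alpha_i}=\{x_i(t)\}$. Fix a nontrivial linear character $\phi$ of $(\mathbb{F}_q,+)$ and define $\varphi_{\alpha_i,s}:X_{\alpha_i}\to\mathbb{C}^\times$, $x_i(d)\mapsto\phi(sd)$. Hooks: $h_\alpha=\{\gamma\in\Phi_+ : \exists\,\gamma'\in\Phi_+\cup\{0\},\ \gamma+\gamma'=\alpha\}$.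 Arm: $\operatorname{arm}(h_\alpha)=(h_\alpha\cap h_{\alpha_{12}})\setminus\{\alpha\}$ if $\alpha\ne\alpha_{12}$, and $\operatorname{arm}(h_{\alpha_{12}})=\{\alpha_8,\alpha_9,\alpha_{10},\alpha_{11}\}$. Leg: $\operatorname{leg}(h_\alpha)=h_\alpha\setminus(\operatorname{arm}(h_\alpha)\cup\{\alpha\})$. Products of root subgroups over a set of roots are taken in any fixed order. *)

From HB Require Import structures.
From mathcomp Require Import all_boot all_order all_algebra all_fingroup all_field.
Set Implicit Arguments. Unset Strict Implicit. Unset Printing Implicit Defensive.
Import GRing.Theory Num.Theory.

(* Convention: the index i : 'I_12 (0-based) stands for the root alpha_(i+1). *)

(* Coefficients of the positive roots of D4 in the simple roots
   alpha_1, alpha_2, alpha_3 (central node), alpha_4. *)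
Definition posroots : seq (seq int) :=
  [:: [:: 1; 0; 0; 0]%Z; [:: 0; 1; 0; 0]%Z; [:: 0; 0; 1; 0]%Z; [:: 0; 0; 0; 1]%Z;
      [:: 1; 0; 1; 0]%Z; [:: 0; 1; 1; 0]%Z; [:: 0; 0; 1; 1]%Z; [:: 1; 1; 1; 0]%Z;
      [:: 1; 0; 1; 1]%Z; [:: 0; 1; 1; 1]%Z; [:: 1; 1; 1; 1]%Z; [:: 1; 1; 2; 1]%Z].

Definition roots : seq (seq int) := posroots ++ map (map (fun z => - z)%R) posroots.

Definition rt (i : 'I_12) : seq int := nth [::] posroots i.

Definition vadd (a b : seq int) : seq int := map (fun p => (p.1 + p.2)%R) (zip a b).

Definition ht (i : 'I_12) : int := foldr (fun z acc => (z + acc)%R) 0%R (rt i).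

Definition closed_set (S : {set 'I_12}) : Prop :=
  S != set0 /\
  forall a b, a \in S -> b \in S ->
    (vadd (rt a) (rt b) \in [seq rt i | i in S]) \/ (vadd (rt a) (rt b) \notin roots).

(* hook h_alpha = {gamma in Phi_+ | exists gamma' in Phi_+ u {0}, gamma + gamma' = alpha} *)
Definition hook (a : 'I_12) : {set 'I_12} :=
  [set g : 'I_12 | (rt g == rt a) || [exists g' : 'I_12, vadd (rt g) (rt g') == rt a]].

Definition top_root : 'I_12 := inord 11.

Definition arm (a : 'I_12) : {set 'I_12} :=
  if a != top_root then (hook a :&: hook top_root) :\ a
  else [set (inord 7 : 'I_12); inord 8; inord 9; inord 10].

Definition leg (a : 'I_12) : {set 'I_12} := hook a :\: (arm a :|: [set a]).

(* Commutator table, 1-based as in the paper: for i < j,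
   [x_i(t), x_j(u)] = x_k(c t u) when comm_tab i j = Some (k, c), trivial otherwise. *)
Definition comm_tab (i j : nat) : option (nat * int) :=
  match i, j with
  | 1, 3 => Some (5, 1%Z)   | 1, 6 => Some (8, (-1)%Z) | 1, 7 => Some (9, 1%Z)
  | 1, 10 => Some (11, (-1)%Z)
  | 2, 3 => Some (6, 1%Z)   | 2, 5 => Some (8, (-1)%Z) | 2, 7 => Some (10, 1%Z)
  | 2, 9 => Some (11, (-1)%Z)
  | 3, 4 => Some (7, 1%Z)   | 3, 11 => Some (12, (-1)%Z)
  | 4, 5 => Some (9, (-1)%Z) | 4, 6 => Some (10, (-1)%Z) | 4, 8 => Some (11, (-1)%Z)
  | 5, 10 => Some (12, (-1)%Z) | 6, 9 => Some (12, (-1)%Z) | 7, 8 => Some (12, 1%Z)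
  | _, _ => None
  end.

Definition prodx (gT : finGroupType) (F : finFieldType) (x : 'I_12 -> F -> gT)
  (d : {ffun 'I_12 -> F}) : gT := (\prod_(i < 12) x i (d i))%g.

(* Hypotheses: x realises the Sylow p-subgroup U of D4(q) with the paper's relations. *)
Definition D4_unipotent (gT : finGroupType) (F : finFieldType)
  (U : {group gT}) (x : 'I_12 -> F -> gT) : Prop :=
  [/\ forall i t u, x i (t + u)%R = (x i t * x i u)%g,
      forall g, g \in U <-> exists d, g = prodx x d,
      injective (prodx x)
    & forall (i j : 'I_12) t u, i < j ->
        ([~ x i t, x j u])%g =
        match comm_tab i.+1 j.+1 with
        | Some (k, c) => x (inord k.-1) (c%:~R * t * u)%R
        | None => 1%g
        end].

Definition Xroot (gT : finGroupType) (F : finFieldType) (x : 'I_12 -> F -> gT)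
  (a : 'I_12) : {set gT} := [set x a t | t : F].

Definition Vset (gT : finGroupType) (F : finFieldType) (x : 'I_12 -> F -> gT)
  (a : 'I_12) : {set gT} :=
  [set prodx x d | d in [set d : {ffun 'I_12 -> F} | [forall i in leg a, d i == 0%R]]].

(* The ordered product V of the root subgroups X_gamma, gamma outside the leg of alpha, is a
   group because its index set is closed: conjugating X_j by X_i only adds factors X_k with
   alpha_k = alpha_i + alpha_j, which come later in the product.  Every decomposition
   alpha = beta + gamma into positive roots has beta or gamma in the leg, so dropping alpha
   leaves a set Y that is still closed under adding roots of V; the ordered product over Y is
   then a subgroup normalised by X_alpha with V = X_alpha Y and X_alpha meeting it trivially
   (by uniqueness of the normal form).  Hence g |-> t, for g in x_alpha(t) Y, is a homomorphism
   from V to F_q with kernel Y, so [V, V] <= Y, and lambda = phi (s * t) is the character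
   sought; roots higher than alpha are not in the hook of alpha, so they lie in Y.  The
   finitely many facts about D4 used here are decided by computation. *)

From Pilot Require Import Defs.
From HB Require Import structures.
From mathcomp Require Import all_boot all_order all_algebra all_fingroup all_field.
From mathcomp Require Import commutator zify.
Import Order.TTheory GRing.Theory Num.Theory.
Set Implicit Arguments. Unset Strict Implicit. Unset Printing Implicit Defensive.

Section OrderedProduct.
Variables (gT : finGroupType) (n : nat) (X : nat -> {group gT}).
Local Open Scope group_scope.

Definition oprod m : {set gT} := \prod_(m <= i < n) X i.

Lemma oprod_geq m : n <= m -> oprod m = 1.
Proof. exact: big_geq. Qed.

Lemma oprod_ltn m : m < n -> oprod m = X m * oprod m.+1.
Proof. exact: big_ltn. Qed.

Lemma oprod_mkord m : oprod m = \prod_(i < n | m <= i) X i.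
Proof. exact: big_geq_mkord. Qed.

Lemma group1_oprod m : 1 \in oprod m.
Proof.
rewrite oprod_mkord; apply/prodsgP; exists (fun=> 1) => [i _|]; first exact: group1.
by rewrite big1.
Qed.

Lemma sub_oprod m k : m <= k < n -> X k \subset oprod m.
Proof.
case/andP=> le_mk lt_kn; apply/subsetP=> g Xg; rewrite oprod_mkord.
apply/prodsgP; exists (fun i => if val i == k then g else 1) => [i _|].
  by case: eqP => [-> | _]; rewrite ?group1.
by rewrite (big_only1 (Ordinal lt_kn)) //= ?eqxx // => j /negbTE; rewrite -val_eqE => ->.
Qed.

Lemma oprod_norm (N : {set gT}) m :
    (forall k, m < k -> group_set (oprod k)) ->
    (forall j, m <= j < n -> {in N, forall g, X j :^ g \subset X j * oprod j.+1}) ->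
  N \subset 'N(oprod m).
Proof.
move Dd: (n - m) => d; elim: d m Dd => [|d IHd] m Dd grp conjX.
  by rewrite oprod_geq ?norms1 //; lia.
have lt_mn : m < n by lia.
have grp1 : group_set (oprod m.+1) by apply: grp.
have nN : N \subset 'N(oprod m.+1).
  apply: IHd => [|k lt_mk|j /andP[lt_mj lt_jn]]; first lia.
    by apply: grp; apply: ltnW.
  by apply: conjX; rewrite ltnW.
apply/subsetP=> g Ng; rewrite inE oprod_ltn // conjsMg.
have nNg : oprod m.+1 :^ g \subset oprod m.+1 by have := subsetP nN g Ng; rewrite inE.
apply: subset_trans (mulgSS (conjX m _ g Ng) nNg) _; first by rewrite leqnn.
by rewrite -mulgA (mulGid (Group grp1)).
Qed.

Lemma oprod_group :
    (forall i j, i < j < n -> {in X i, forall g, X j :^ g \subset X j * oprod j.+1}) ->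
  forall m, group_set (oprod m).
Proof.
move=> conjX; suff grp d m : n - m <= d -> group_set (oprod m) by move=> m; apply: (grp (n - m)).
elim: d m => [|d IHd] m le_nm; first by rewrite oprod_geq ?group_set_one //; lia.
have [lt_mn | le_nm'] := ltnP m n; last by rewrite oprod_geq ?group_set_one.
have grp1 : group_set (oprod m.+1) by apply: IHd; lia.
rewrite oprod_ltn //; have -> : oprod m.+1 = Group grp1 by [].
apply/comm_group_setP; apply: normC; apply: oprod_norm => [k lt_mk|j /andP[lt_mj lt_jn]].
  by apply: IHd; lia.
by apply: conjX; rewrite lt_mj.
Qed.

Lemma oprod_sub_mulg (Y : {group gT}) a :
    (forall i, i < n -> i != a -> X i \subset Y) -> X a \subset 'N(Y) ->
  forall m, oprod m \subset X a * Y.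
Proof.
move=> sXY nYXa m; move Dd: (n - m) => d; elim: d m Dd => [|d IHd] m Dd.
  rewrite oprod_geq; last lia.
  by apply/subsetP=> _ /set1P ->; rewrite -[1]mulg1 mem_mulg ?group1.
have lt_mn : m < n by lia.
rewrite oprod_ltn //; apply: subset_trans (mulgS _ (IHd m.+1 _)) _; first lia.
have [-> | ne_ma] := eqVneq m a; first by rewrite mulgA mulGid.
apply: subset_trans (mulSg _ (sXY m lt_mn ne_ma)) _.
by rewrite mulgA -(normC nYXa) -mulgA mulGid.
Qed.

End OrderedProduct.

Section CosetCoordinate.
Variables (gT : finGroupType) (F : finZmodType) (e : F -> gT) (V Y : {group gT}).
Local Open Scope group_scope.
Hypothesis eD : forall t u, e (t + u)%R = e t * e u.
Hypothesis eY : forall t, e t \in Y -> t = 0%R.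
Hypothesis nYe : forall t, e t \in 'N(Y).
Hypothesis sV_eY : V \subset [set e t | t : F] * Y.

Definition coord g := odflt 0%R [pick t | (e t)^-1 * g \in Y].

Let e0 : e 0%R = 1.
Proof. by apply: (mulgI (e 0%R)); rewrite -eD addr0 mulg1. Qed.

Lemma coordP g : g \in V -> (e (coord g))^-1 * g \in Y.
Proof.
move/(subsetP sV_eY)/mulsgP=> [_ y /imsetP[t _ ->] Yy ->].
rewrite /coord; case: pickP => [u // | /(_ t)].
by rewrite mulKg Yy.
Qed.

Lemma coord_eq g t : g \in V -> (e t)^-1 * g \in Y -> coord g = t.
Proof.
move=> Vg Yg; apply/eqP; rewrite eq_sym -subr_eq0 addrC; apply/eqP/eY.
have eN u : e (- u)%R = (e u)^-1 by apply: (mulgI (e u)); rewrite -eD subrr e0 mulgV.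
have : (e (coord g))^-1 * g * ((e t)^-1 * g)^-1 \in Y by rewrite groupM ?groupV ?coordP.
by rewrite eD eN invMg invgK mulgA mulgK.
Qed.

Lemma coord_e t : e t \in V -> coord (e t) = t.
Proof. by move/coord_eq; apply; rewrite mulVg group1. Qed.

Lemma coord_ker g : g \in V -> g \in Y -> coord g = 0%R.
Proof. by move=> Vg Yg; apply: coord_eq; rewrite ?e0 ?invg1 ?mul1g. Qed.

Lemma coordM : {in V &, {morph coord : g h / g * h >-> (g + h)%R}}.
Proof.
move=> g h Vg Vh; apply: coord_eq; first exact: groupM.
have -> : (e (coord g + coord h)%R)^-1 * (g * h)
          = ((e (coord g))^-1 * g) ^ e (coord h) * ((e (coord h))^-1 * h).
  by rewrite eD invMg conjgE !mulgA mulgK.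
by rewrite groupM ?coordP // memJ_norm ?coordP.
Qed.

Lemma commg_sub_ker : [~: V, V] \subset Y.
Proof.
rewrite gen_subG; apply/subsetP=> _ /imset2P[g h Vg Vh ->].
have coordV u : u \in V -> coord u^-1 = (- coord u)%R.
  move=> Vu; apply/eqP; rewrite -addr_eq0 -coordM ?groupV // mulVg coord_ker ?group1 //.
have coord_comm : coord [~ g, h] = 0%R.
  rewrite commgEl conjgE !coordM ?groupV ?groupM ?groupV // !coordV //.
  by rewrite addrCA addKr addNr.
by have := coordP (groupR Vg Vh); rewrite coord_comm e0 invg1 mul1g.
Qed.

Lemma image_cap_commg : [set e t | t : F] :&: [~: V, V] = 1.
Proof.
apply/eqP; rewrite eqEsubset sub1set inE group1 andbT; apply/andP; split.
  apply/subsetP=> _ /setIP[/imsetP[t _ ->] /(subsetP commg_sub_ker) /eY ->].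
  by rewrite e0 set11.
by apply/imsetP; exists 0%R; rewrite ?e0.
Qed.

End CosetCoordinate.

Lemma comm_tab_lt i j k c : comm_tab i j = Some (k, c) -> j < k <= 12.
Proof.
by move: i j => [|[|[|[|[|[|[|[|i]]]]]]]] [|[|[|[|[|[|[|[|[|[|[|[|j]]]]]]]]]]]] // [<- _].
Qed.

(* Computable versions of rt, ht, hook and leg on nat indices, for deciding by vm_compute. *)
Definition rtn (k : nat) : seq int := nth [::] posroots k.

Definition htn (k : nat) : int := foldr (fun z acc => z + acc)%R 0%R (rtn k).

Definition hookb (a g : nat) : bool :=
  (rtn g == rtn a) || has (fun h => vadd (rtn g) (rtn h) == rtn a) (iota 0 12).

Definition legb (a g : nat) : bool :=
  [&& hookb a g, g != a & if a == 11 then g \notin [:: 7; 8; 9; 10] else ~~ hookb 11 g].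

Lemma mem_hook (a g : 'I_12) : (g \in hook a) = hookb a g.
Proof.
rewrite inE /hookb; congr (_ || _); apply/existsP/hasP => [[h] | [h]].
  by exists (val h); rewrite // mem_iota ltn_ord.
by rewrite mem_iota => /andP[_ lt_h12]; exists (Ordinal lt_h12).
Qed.

Lemma mem_leg (a g : 'I_12) : (g \in leg a) = legb a g.
Proof.
have top : (a == top_root) = (val a == 11) by rewrite -val_eqE /= inordK.
rewrite /leg in_setD in_setU in_set1 mem_hook /arm top /legb -val_eqE.
case: (val a =P 11) => [a11 | _] /=.
  rewrite !inE -!val_eqE /= !inordK //.
  by case: (hookb a g); case: (g == a :> nat); rewrite /= ?andbT ?andbF ?orbT ?orbF -?orbA.
rewrite in_setD1 in_setI !mem_hook /top_root inordK // -val_eqE.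
by case: (hookb a g); case: (g == a :> nat); rewrite /= ?andbT ?andbF ?orbT ?orbF.
Qed.

Lemma notin_leg_self a : a \notin leg a.
Proof. by rewrite mem_leg /legb eqxx andbF. Qed.

Lemma forall12P (P : nat -> bool) : all P (iota 0 12) -> forall i : 'I_12, P i.
Proof. by move/allP=> allP i; apply: allP; rewrite mem_iota ltn_ord. Qed.

Lemma rt_inj : injective rt.
Proof. by move=> i j /eqP; rewrite nth_uniq // => /eqP /val_inj. Qed.

Lemma rt_root i : rt i \in Defs.roots.
Proof. by rewrite mem_cat mem_nth. Qed.

(* comm_tab is 1-based, and a nontrivial entry records that alpha_i + alpha_j is a root. *)
Lemma comm_tab_vadd (i j : 'I_12) k c : i != j ->
  comm_tab (minn i j).+1 (maxn i j).+1 = Some (k, c) -> vadd (rt i) (rt j) = rt (inord k.-1).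
Proof.
have check : all (fun i => all (fun j => (i != j) ==>
  if comm_tab (minn i j).+1 (maxn i j).+1 is Some (k, _)
  then vadd (rtn i) (rtn j) == rtn k.-1 else true) (iota 0 12)) (iota 0 12) by vm_compute.
move=> ne_ij Dk; have /andP[_ le_k12] := comm_tab_lt Dk.
move: (forall12P (forall12P check i) j); rewrite ne_ij Dk /= => /eqP ->.
by rewrite /rt inordK //; lia.
Qed.

Lemma leg_compl_closed a : closed_set (~: leg a).
Proof.
have check : all (fun a => all (fun b => all (fun c => ~~ legb a b ==> ~~ legb a c ==>
  (vadd (rtn b) (rtn c) \notin Defs.roots) ||
  has (fun k => ~~ legb a k && (vadd (rtn b) (rtn c) == rtn k)) (iota 0 12))
  (iota 0 12)) (iota 0 12)) (iota 0 12) by vm_compute.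
split; first by apply/set0Pn; exists a; rewrite in_setC notin_leg_self.
move=> b c; rewrite !in_setC !mem_leg => Lb Lc.
move: (forall12P (forall12P (forall12P check a) b) c); rewrite Lb Lc !implyTb.
case/orP=> [? | ]; first by right.
case/hasP=> k; rewrite mem_iota => /andP[_ lt_k12] /andP[Lk /eqP ->]; left.
by apply: (image_f rt (x := Ordinal lt_k12)); rewrite in_setC mem_leg.
Qed.

Lemma no_leg_decomp (a b c : 'I_12) : b \notin leg a -> c \notin leg a ->
  vadd (rt b) (rt c) != rt a.
Proof.
have check : all (fun a => all (fun b => all (fun c => ~~ legb a b ==> ~~ legb a c ==>
  (vadd (rtn b) (rtn c) != rtn a)) (iota 0 12)) (iota 0 12)) (iota 0 12) by vm_compute.
rewrite !mem_leg => Lb Lc.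
by move: (forall12P (forall12P (forall12P check a) b) c); rewrite Lb Lc.
Qed.

Lemma hook_ht (a g : 'I_12) : g \in hook a -> (ht g <= ht a)%R.
Proof.
have check : all (fun a => all (fun g => hookb a g ==> (htn g <= htn a)%R)
  (iota 0 12)) (iota 0 12) by vm_compute.
by rewrite mem_hook => Hg; move: (forall12P (forall12P check a) g); rewrite Hg.
Qed.

Lemma ht_gt_notin_leg (a g : 'I_12) : (ht a < ht g)%R -> g \notin a |: leg a.
Proof.
move=> lt_ag; rewrite in_setU1 negb_or; apply/andP; split.
  by apply: contraTneq lt_ag => ->; rewrite ltxx.
by apply: contraTN lt_ag => /setDP[/hook_ht le_ga _]; rewrite -leNgt.
Qed.

Definition comm_closed (R S : {set 'I_12}) :=
  forall (i j : 'I_12) k c, i \in R -> j \in S -> i != j ->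
    comm_tab (minn i j).+1 (maxn i j).+1 = Some (k, c) -> inord k.-1 \in S.

Lemma comm_closedS (R1 R2 S : {set 'I_12}) :
  R1 \subset R2 -> comm_closed R2 S -> comm_closed R1 S.
Proof. by move=> sR12 cR2S i j k c /(subsetP sR12); apply: cR2S. Qed.

Lemma closed_comm_closed S : closed_set S -> comm_closed S S.
Proof.
case=> _ clS i j k c Si Sj ne_ij Dk.
have := clS i j Si Sj; rewrite (comm_tab_vadd ne_ij Dk) rt_root.
by case=> // /imageP[l Sl /rt_inj ->].
Qed.

Lemma leg_comm_closed a : comm_closed (~: leg a) (~: (a |: leg a)).
Proof.
move=> i j k c Si; rewrite !in_setC !in_setU1 !negb_or => /andP[ne_ja Lj] ne_ij Dk.
have Sj : j \in ~: leg a by rewrite in_setC.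
have := closed_comm_closed (leg_compl_closed a) Si Sj ne_ij Dk; rewrite in_setC => -> /=.
have := @no_leg_decomp a i j; rewrite -in_setC (comm_tab_vadd ne_ij Dk) => /(_ Si Lj).
by rewrite andbT; apply: contra_neq => ->.
Qed.

Section RootSubgroups.
Variables (F : finFieldType) (gT : finGroupType) (x : 'I_12 -> F -> gT).
Local Open Scope group_scope.
Hypothesis xD : forall i t u, x i (t + u)%R = x i t * x i u.
Hypothesis xR : forall (i j : 'I_12) t u, i < j ->
  [~ x i t, x j u] = if comm_tab i.+1 j.+1 is Some (k, c)
                     then x (inord k.-1) (c%:~R * t * u)%R else 1.

Lemma root0 i : x i 0%R = 1.
Proof. by apply: (mulgI (x i 0%R)); rewrite -xD addr0 mulg1. Qed.

Lemma rootN i t : x i (- t)%R = (x i t)^-1.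
Proof. by apply: (mulgI (x i t)); rewrite -xD subrr root0 mulgV. Qed.

Lemma root_conj (i j : 'I_12) t u : i != j -> exists v,
  x j u ^ x i t = x j u * if comm_tab (minn i j).+1 (maxn i j).+1 is Some (k, _)
                          then x (inord k.-1) v else 1.
Proof.
move=> ne_ij; rewrite conjg_mulR.
case: (ltngtP i j) => [lt_ij | lt_ji | /val_inj eq_ij]; last by rewrite eq_ij eqxx in ne_ij.
  rewrite -invg_comm xR //.
  case: comm_tab => [[k c]|]; last by exists 0%R; rewrite invg1.
  by exists (- (c%:~R * t * u))%R; rewrite rootN.
rewrite xR //.
by case: comm_tab => [[k c]|]; [exists (c%:~R * u * t)%R | exists 0%R].
Qed.

Lemma Xroot_group i : group_set (Xroot x i).
Proof.
apply/group_setP; split; first by apply/imsetP; exists 0%R; rewrite ?root0.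
by move=> _ _ /imsetP[t _ ->] /imsetP[u _ ->]; apply/imsetP; exists (t + u)%R; rewrite ?xD.
Qed.

(* Indexed by nat for use with oprod; the values at i >= 12 are junk and never used. *)
Definition Xfam (S : {set 'I_12}) (i : nat) : {group gT} :=
  if inord i \in S then <<Xroot x (inord i)>>%G else 1%G.

Lemma Xfam_ord S (i : 'I_12) : Xfam S i = (if i \in S then Xroot x i else 1) :> {set gT}.
Proof.
by rewrite /Xfam inord_val; case: ifP => //= _; rewrite (genGid (Group (Xroot_group i))).
Qed.

Lemma Xfam_conj R S (i j : 'I_12) : comm_closed R S -> i \in R ->
  {in Xroot x i, forall g, Xfam S j :^ g \subset Xfam S j * oprod 12 (Xfam S) j.+1}.
Proof.
move=> cRS Ri _ /imsetP[t _ ->]; rewrite Xfam_ord.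
case: ifP => Sj; last by rewrite conjs1g mul1g sub1set group1_oprod.
have [<- | ne_ij] := eqVneq i j.
  have Xt : x i t \in Group (Xroot_group i) by apply/imsetP; exists t.
  by rewrite (conjGid Xt) mulg_subl ?group1_oprod.
apply/subsetP=> _ /imsetP[_ /imsetP[u _ ->] ->].
have [v ->] := root_conj t u ne_ij; apply: mem_mulg; first by apply/imsetP; exists u.
case Dk: comm_tab => [[k c]|]; last exact: group1_oprod.
have /andP[lt_jk le_k12] := comm_tab_lt Dk.
apply: (subsetP (@sub_oprod _ _ _ _ k.-1 _)); first lia.
by rewrite /Xfam (cRS _ _ _ _ Ri Sj ne_ij Dk); apply/mem_gen/imsetP; exists v.
Qed.

Lemma oprod_XfamE (T : {set 'I_12}) :
  oprod 12 (Xfam (~: T)) 0 =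
    [set prodx x d | d in [set d : {ffun 'I_12 -> F} | [forall i in T, d i == 0%R]]].
Proof.
apply/setP=> g; rewrite oprod_mkord; apply/prodsgP/imsetP => [[c Xc ->] | [d]].
  pose d := [ffun i : 'I_12 => if i \in T then 0%R else odflt 0%R [pick t | x i t == c i]].
  exists d; first by rewrite inE; apply/forall_inP=> i Ti; rewrite ffunE Ti.
  apply: eq_bigr => i _; have := Xc i isT; rewrite Xfam_ord ffunE inE.
  case: (i \in T) => /= [/set1P -> | /imsetP[t _ ->]]; first by rewrite root0.
  by case: pickP => [u /eqP // | /(_ t)]; rewrite eqxx.
rewrite inE => /forall_inP dT ->.
exists (fun i => x i (d i)) => [i _ |]; last by [].
rewrite Xfam_ord inE; case: ifPn => [_ | /negbNE /dT /eqP ->]; last by rewrite root0 group1.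
by apply/imsetP; exists (d i).
Qed.

Lemma prodx_delta (i : 'I_12) t : prodx x [ffun j => if j == i then t else 0%R] = x i t.
Proof.
rewrite /prodx (big_only1 i) ?ffunE ?eqxx // => j /negbTE ne_ji _.
by rewrite ffunE ne_ji root0.
Qed.

Lemma root_in_oprod (S : {set 'I_12}) (i : 'I_12) t :
  i \in S -> x i t \in oprod 12 (Xfam S) 0.
Proof.
move=> Si; apply: (subsetP (@sub_oprod _ _ _ _ i _)); first by rewrite ltn_ord.
by rewrite Xfam_ord Si; apply/imsetP; exists t.
Qed.

Lemma oprod_Xfam_group (S : {set 'I_12}) :
  comm_closed S S -> forall m, group_set (oprod 12 (Xfam S) m).
Proof.
move=> cSS; apply: oprod_group => i j /andP[lt_ij lt_j12] g.
have lt_i12 : i < 12 by lia.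
rewrite -[i]/(val (Ordinal lt_i12)) Xfam_ord; case: ifP => Si.
  exact: (Xfam_conj (Ordinal lt_j12) cSS Si).
by move/set1gP ->; rewrite conjsg1 mulg_subl ?group1_oprod.
Qed.

Section Leg.
Variable a : 'I_12.

Definition Vleg := oprod 12 (Xfam (~: leg a)) 0.
Definition Yleg := oprod 12 (Xfam (~: (a |: leg a))) 0.

Lemma Vset_Vleg : Vset x a = Vleg.
Proof. by rewrite /Vleg oprod_XfamE. Qed.

Lemma root_in_Vleg (g : 'I_12) t : g \notin leg a -> x g t \in Vleg.
Proof. by move=> Lg; apply: root_in_oprod; rewrite in_setC. Qed.

Lemma root_in_Yleg (g : 'I_12) t : g \notin a |: leg a -> x g t \in Yleg.
Proof. by move=> Lg; apply: root_in_oprod; rewrite in_setC. Qed.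

Lemma Vleg_group : group_set Vleg.
Proof. exact/oprod_Xfam_group/closed_comm_closed/leg_compl_closed. Qed.

Let Yleg_comm_closed : comm_closed (~: (a |: leg a)) (~: (a |: leg a)).
Proof.
apply: (@comm_closedS _ (~: leg a)); last exact: leg_comm_closed.
by rewrite setCS subsetUr.
Qed.

Lemma Yleg_group : group_set Yleg.
Proof. exact: oprod_Xfam_group. Qed.

Let a_notin_leg : a \in ~: leg a.
Proof. by rewrite in_setC notin_leg_self. Qed.

Lemma Yleg_norm t : x a t \in 'N(Yleg).
Proof.
apply: (subsetP (oprod_norm (N := Xroot x a) _ _)); last by apply/imsetP; exists t.
  by move=> k _; apply: oprod_Xfam_group.
by move=> j /andP[_ lt_j12]; apply: (Xfam_conj (Ordinal lt_j12) (@leg_comm_closed a)).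
Qed.

Lemma Vleg_sub_mulg : Vleg \subset Xroot x a * Yleg.
Proof.
have XaE : Xroot x a = Xfam (~: leg a) a by rewrite Xfam_ord a_notin_leg.
rewrite XaE; apply: (oprod_sub_mulg (Y := Group Yleg_group)) => [i lt_i12 ne_ia | ].
  rewrite -[i]/(val (Ordinal lt_i12)) Xfam_ord; case: ifP => Si; last exact: sub1G.
  apply/subsetP=> _ /imsetP[t _ ->]; apply: root_in_Yleg.
  by rewrite in_setU1 negb_or ne_ia -in_setC Si.
by rewrite -XaE; apply/subsetP=> _ /imsetP[t _ ->]; apply: Yleg_norm.
Qed.

Hypothesis prodx_inj : injective (prodx x).

Lemma Yleg_root_trivial t : x a t \in Yleg -> t = 0%R.
Proof.
rewrite /Yleg oprod_XfamE => /imsetP[d]; rewrite inE => /forall_inP d0.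
rewrite -prodx_delta => /prodx_inj /ffunP /(_ a); rewrite ffunE eqxx => ->.
by apply/eqP/d0; rewrite setU11.
Qed.

End Leg.

End RootSubgroups.

Unset Implicit Arguments.

Theorem lemma3p1 (F : finFieldType) (gT : finGroupType) (U : {group gT})
  (x : 'I_12 -> F -> gT) (phi : F -> algC)
  (HU : D4_unipotent U x)
  (phi_add : forall a b, phi (a + b)%R = (phi a * phi b)%R)
  (phi_nz : forall a, phi a != 0%R)
  (phi_nontriv : exists a, phi a != 1%R)
  (a : 'I_12) :
  [/\ closed_set (~: leg a),
      (Vset x a \subset U) && group_set (Vset x a),
      (Xroot x a :&: [~: Vset x a, Vset x a])%g = 1%g
    & forall s : F, s != 0%R ->
        exists lam : gT -> algC,
          [/\ forall g h, g \in Vset x a -> h \in Vset x a ->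
                lam (g * h)%g = (lam g * lam h)%R,
              forall g, g \in Vset x a -> lam g != 0%R,
              forall t : F, lam (x a t) = phi (s * t)%R
            & forall (g : 'I_12) (t : F), (ht a < ht g)%R ->
                x g t \in Vset x a /\ lam (x g t) = 1%R]].
Proof.
case: HU => xD Umem inj xR.
pose V := Group (Vleg_group xD xR a); pose Y := Group (Yleg_group xD xR a).
have eY t : x a t \in Y -> t = 0%R := @Yleg_root_trivial _ _ _ xD a inj t.
have nYe t : x a t \in 'N(Y)%g := Yleg_norm xD xR a t.
have sVY : V \subset (Xroot x a * Y)%g := Vleg_sub_mulg xD xR a.
pose c := coord (x a) Y.
have cM : {in V &, {morph c : g h / (g * h)%g >-> (g + h)%R}} := coordM (xD a) eY nYe sVY.
have cE t : c (x a t) = t.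
  by apply: (coord_e (V := V) (xD a) eY sVY); apply: root_in_Vleg (notin_leg_self a).
have phi0 : phi 0%R = 1%R by apply: (mulfI (phi_nz 0%R)); rewrite -phi_add addr0 mulr1.
split.
- exact: leg_compl_closed.
- apply/andP; split; last by rewrite (Vset_Vleg xD) Vleg_group.
  by apply/subsetP=> _ /imsetP[d _ ->]; apply/Umem; exists d.
- by rewrite (Vset_Vleg xD) (image_cap_commg (xD a) eY nYe sVY).
- rewrite (Vset_Vleg xD) => s _; exists (fun g => phi (s * c g)%R).
  split=> [g h Vg Vh | g _ | t | g t /ht_gt_notin_leg Yg]; first by rewrite cM // mulrDr phi_add.
  + exact: phi_nz.
  + by rewrite cE.
  have Lg : g \notin leg a by apply: contra Yg; apply: setU1r.
  by rewrite /c (coord_ker (V := V) (xD a) eY sVY) ?root_in_Vleg ?root_in_Yleg ?mulr0.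
Qed.
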